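(* Let $R$ be a commutative ring and let $g(x)=\sum_{i\ge0}a_ix^i$ and $h(x)=\sum_{i\ge0}b_ix^i$ be formal power series in $R[[x]]$. Then $$g(x)\,h(x)=\sum_{m=0}^{\infty}x^m\sum_{k=0}^{m}\sigma_k\sum_{j=k}^{m}T(k+m-j,k)\,T(j,k)\Bigl(\sum_{t=j-k}^{j}T(k,j-t)\,\sigma_t\,a_t\Bigr)\Bigl(\sum_{t=j-k}^{j}T(k,j-t)\,\sigma_t\,b_t\Bigr).$$
   Context: For integers $0\le k\le n$, $T(n,k)=1$ if the bitwise AND of the binary expansions of $k$ and $n-k$ is $0$, and $T(n,k)=0$ otherwise (equivalently $T(n,k)=\binom{n}{k}\bmod 2$; this is the Sierpiński triangle, OEIS A047999). For an integer $k\ge0$, $\sigma_k=-1$ if the number of ones in the binary expansion of $k$ is odd and $\sigma_k=1$ otherwise. *)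

From Stdlib Require Import PeanoNat.
From mathcomp Require Import all_boot all_algebra.
Set Implicit Arguments. Unset Strict Implicit. Unset Printing Implicit Defensive.
Import GRing.Theory.
Local Open Scope ring_scope.

(* Sierpinski triangle A047999: T(n,k) = 1 iff k <= n and (k AND (n-k)) = 0 *)
Definition Tsier (n k : nat) : bool :=
  (k <= n)%N && (Nat.land k (n - k) == 0)%N.

(* number of ones in the binary expansion of n (n < 2^n, so n bits suffice) *)
Definition popcount (n : nat) : nat := (\sum_(i < n) Nat.testbit n i)%N.

Definition sigma (R : pzRingType) (k : nat) : R := (-1) ^+ popcount k.

From Stdlib Require Import PeanoNat.
From mathcomp Require Import all_boot all_algebra zify ring.
Import GRing.Theory.

(* Expanding the two inner sums turns the right-hand side into
   sum_(p, q <= m) a_p b_q C(p, q) with an integer coefficient C(p, q); we show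
   C(p, q) = [p + q = m].  Bitwise, T(n, k) = 1 iff k is a submask of n, and for
   k a submask of j the window j - k <= t <= j together with T(k, j - t) = 1 holds
   iff j = k lor t.  So the only j contributing is j = k lor p = k lor q, and
   C(p, q) = sigma_p sigma_q sum_k sigma_k over the k with p lxor q a submask of k,
   k lor p <= m and k land (m - k lor p) = 0.  Put c = p land q and
   e = m - k lor p.  Flipping the top bit of c \ e is a sign-reversing involution
   on the k with c not a submask of e.  The remaining k are exactly the k with
   p lxor q submask of k submask of m - 2c (provided 2c <= m and m - 2c is
   disjoint from c); a signed sum over such an interval of the Boolean lattice
   vanishes unless it is a single point, i.e. m - 2c = p lxor q, which means
   p + q = m, and then it is sigma_(p lxor q) = sigma_p sigma_q. *)

Definition flipbit (k i : nat) : nat := Nat.lxor k (Nat.pow 2 i).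

Definition submask (k n : nat) : bool := Nat.ldiff k n == 0.

Local Hint Rewrite Nat.pow2_bits_eqb : bitwise.

Ltac bitwise_cases :=
  rewrite /flipbit; autorewrite with bitwise;
  repeat match goal with
  | |- context [Nat.eqb ?i ?j] => case: (Nat.eqb_spec i j) => [<-|_]
  | |- context [Nat.testbit ?a ?i] => case: (Nat.testbit a i)
  end; cbn; intros; try discriminate; try reflexivity; try congruence.

Lemma testbit_eq i {a b : nat} : a = b -> Nat.testbit a i = Nat.testbit b i.
Proof. by move=> ->. Qed.

Lemma addn_disjoint a b : Nat.land a b = 0 -> a + b = Nat.lor a b.
Proof. by move=> ab0; rewrite -Nat.lxor_lor // -Nat.add_nocarry_lxor. Qed.

Lemma subn_submask {a b : nat} : submask b a -> a - b = Nat.ldiff a b.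
Proof. by move/eqP; apply: Nat.sub_nocarry_ldiff. Qed.

Lemma submask_leq {a b : nat} : submask b a -> b <= a.
Proof.
move/eqP=> ba0; have -> : b = Nat.land b a.
  by apply: Nat.bits_inj => x; move: (testbit_eq x ba0); bitwise_cases.
exact/leP/Nat.land_le_r.
Qed.

Lemma leq_lor a b : a <= Nat.lor a b.
Proof. by apply: submask_leq; apply/eqP/Nat.bits_inj => x; bitwise_cases. Qed.

Lemma flipbitK k i : flipbit (flipbit k i) i = k.
Proof. by apply: Nat.bits_inj => x; bitwise_cases. Qed.

Lemma testbit_ge n i : n <= i -> Nat.testbit n i = false.
Proof.
case: n => [|n] ni; first exact: Nat.bits_0.
by apply: Nat.bits_above_log2; have := Nat.log2_lt_lin n.+1; lia.
Qed.

Lemma popcount_widen n L : n <= L -> popcount n = \sum_(i < L) Nat.testbit n i.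
Proof.
move=> nL; rewrite /popcount -(subnKC nL) big_split_ord /=.
by rewrite [X in _ + X]big1 ?addn0 // => i _; rewrite testbit_ge //; lia.
Qed.

Lemma popcount_disjointD a b :
  Nat.land a b = 0 -> popcount (a + b) = popcount a + popcount b.
Proof.
move=> ab0; rewrite !(popcount_widen _ (a + b)) ?leq_addr ?leq_addl //.
rewrite -big_split /= addn_disjoint //; apply: eq_bigr => i _.
by move: (testbit_eq i ab0); bitwise_cases.
Qed.

Lemma popcount_pow2 i : popcount (Nat.pow 2 i) = 1.
Proof.
have i_lt : i < Nat.pow 2 i by apply/ltP/Nat.pow_gt_lin_r.
rewrite (popcount_widen _ _ (leqnn _)) (bigD1 (Ordinal i_lt)) //= big1 => [|j ji].
  by rewrite Nat.pow2_bits_eqb Nat.eqb_refl.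
rewrite Nat.pow2_bits_eqb; case: Nat.eqb_spec => // ij.
by rewrite -val_eqE /= -ij eqxx in ji.
Qed.

Lemma addn_ldiff_land a b : Nat.ldiff a b + Nat.land a b = a.
Proof.
rewrite addn_disjoint; last by apply: Nat.bits_inj => x; bitwise_cases.
by apply: Nat.bits_inj => x; bitwise_cases.
Qed.

Lemma addn_ldiff_lxor a b : Nat.ldiff a b + Nat.ldiff b a = Nat.lxor a b.
Proof.
rewrite addn_disjoint; last by apply: Nat.bits_inj => x; bitwise_cases.
by apply: Nat.bits_inj => x; bitwise_cases.
Qed.

Lemma addn_lxor_land p q : p + q = Nat.lxor p q + 2 * Nat.land p q.
Proof.
have := addn_ldiff_land p q; have := addn_ldiff_land q p.
by have := addn_ldiff_lxor p q; rewrite (Nat.land_comm q p); lia.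
Qed.

Lemma popcount_lxor p q :
  popcount p + popcount q = popcount (Nat.lxor p q) + 2 * popcount (Nat.land p q).
Proof.
have disj a b : Nat.land (Nat.ldiff a b) (Nat.land a b) = 0.
  by apply: Nat.bits_inj => x; bitwise_cases.
have disj_xor : Nat.land (Nat.ldiff p q) (Nat.ldiff q p) = 0.
  by apply: Nat.bits_inj => x; bitwise_cases.
have := congr1 popcount (addn_ldiff_land p q).
have := congr1 popcount (addn_ldiff_land q p).
have := congr1 popcount (addn_ldiff_lxor p q).
rewrite !popcount_disjointD ?(Nat.land_comm q p) //; first lia.
by rewrite [Nat.land p q]Nat.land_comm.
Qed.

Lemma Tsier_addn k e : Tsier (k + e) k = (Nat.land k e == 0).
Proof. by rewrite /Tsier leq_addr addKn. Qed.

Lemma Tsier_submask n k : Tsier n k = submask k n.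
Proof.
apply/andP/idP => [[kn /eqP disj] | kn].
  have -> : n = Nat.lor k (n - k) by rewrite -addn_disjoint // subnKC.
  by apply/eqP/Nat.bits_inj => x; bitwise_cases.
split; first exact: submask_leq.
by rewrite subn_submask //; apply/eqP/Nat.bits_inj => x; bitwise_cases.
Qed.

Lemma window_submaskE k j p : submask k j ->
  [&& j - k <= p, p <= j & submask (j - p) k] = (j == Nat.lor k p).
Proof.
move=> /eqP kj; apply/idP/eqP => [/and3P[_ pj /eqP jpk] | j_def].
  have jp_j : submask (j - p) j.
    by apply/eqP/Nat.bits_inj => x; move: (testbit_eq x kj) (testbit_eq x jpk); bitwise_cases.
  have p_def : p = Nat.ldiff j (j - p) by rewrite -subn_submask // subKn.
  rewrite p_def; apply: Nat.bits_inj => x.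
  by move: (testbit_eq x kj) (testbit_eq x jpk); bitwise_cases.
have p_sub : submask p (Nat.lor k p) by apply/eqP/Nat.bits_inj => x; bitwise_cases.
have k_sub : submask k (Nat.lor k p) by apply/eqP/Nat.bits_inj => x; bitwise_cases.
rewrite j_def (subn_submask k_sub) (subn_submask p_sub) (submask_leq p_sub) /=.
apply/andP; split; last by apply/eqP/Nat.bits_inj => x; bitwise_cases.
apply/leP; apply: Nat.le_trans (Nat.ldiff_le_l p k); apply/leP/eq_leq.
by apply: Nat.bits_inj => x; bitwise_cases.
Qed.

Definition term_support (m k j p q : nat) : bool :=
  [&& Tsier (k + m - j) k, Tsier j k, j - k <= p <= j, Tsier k (j - p),
      j - k <= q <= j & Tsier k (j - q)].

Definition admissible (m p q k : nat) : bool :=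
  [&& Nat.lor k p == Nat.lor k q, Nat.lor k p <= m &
      Nat.land k (m - Nat.lor k p) == 0].

Lemma term_supportE m k j p q : j <= m ->
  term_support m k j p q =
  [&& j == Nat.lor k p, Nat.lor k p == Nat.lor k q & Nat.land k (m - j) == 0].
Proof.
move=> jm; rewrite /term_support -addnBA // Tsier_addn !Tsier_submask.
case kj: (submask k j); last first.
  rewrite /= andbF; apply/esym/negbTE; apply: contraFN kj => /andP[/eqP -> _].
  by apply/eqP/Nat.bits_inj => x; bitwise_cases.
have [wp wq] := (window_submaskE _ _ p kj, window_submaskE _ _ q kj).
rewrite /= -!andbA in wp wq *.
transitivity ((Nat.land k (m - j) == 0) && ((j == Nat.lor k p) && (j == Nat.lor k q))).
  by rewrite -wp -wq -!andbA.
by rewrite andbC; case: (j =P Nat.lor k p) => [->|]; rewrite ?andbF.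
Qed.

Lemma sum_term_support m k p q :
  \sum_(k <= j < m.+1) term_support m k j p q = admissible m p q k.
Proof.
transitivity (\sum_(k <= j < m.+1 | j == Nat.lor k p)
   (Nat.lor k p == Nat.lor k q) && (Nat.land k (m - Nat.lor k p) == 0)).
  rewrite [RHS]big_mkcond; apply: eq_big_nat => j /andP[_ jm].
  by rewrite term_supportE //; have [->|] := eqVneq j (Nat.lor k p).
rewrite big_nat1_eq ltnS leq_lor /admissible.
by case: (Nat.lor k p <= m); rewrite ?andbF.
Qed.

Lemma lor_eq_submask_lxor k p q :
  (Nat.lor k p == Nat.lor k q) = submask (Nat.lxor p q) k.
Proof.
apply/eqP/eqP => [kpq | dk]; apply: Nat.bits_inj => x.
  by move: (testbit_eq x kpq); bitwise_cases.
by move: (testbit_eq x dk); bitwise_cases.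
Qed.

Lemma lor_submask_lxor {k p q : nat} :
  submask (Nat.lxor p q) k -> Nat.lor k p = Nat.lor k (Nat.land p q).
Proof. by move/eqP=> dk; apply: Nat.bits_inj => x; move: (testbit_eq x dk); bitwise_cases. Qed.

Lemma submask_subn_lor m k c :
  [&& Nat.lor k c <= m, Nat.land k (m - Nat.lor k c) == 0 &
      submask c (m - Nat.lor k c)] =
  [&& submask k (m - 2 * c), 2 * c <= m & Nat.land (m - 2 * c) c == 0].
Proof.
apply/and3P/and3P => [[kc_m /eqP ke /eqP ce] | [/eqP kY c2_m /eqP Yc]].
  set e := m - Nat.lor k c in ke ce.
  have kc : Nat.land k c = 0.
    by apply: Nat.bits_inj => x; move: (testbit_eq x ke) (testbit_eq x ce); bitwise_cases.
  have e_split : e = c + Nat.ldiff e c.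
    rewrite addn_disjoint; last by apply: Nat.bits_inj => x; bitwise_cases.
    by apply: Nat.bits_inj => x; move: (testbit_eq x ce); bitwise_cases.
  have Y_def : m - 2 * c = Nat.lor k (Nat.ldiff e c).
    rewrite -addn_disjoint; last first.
      by apply: Nat.bits_inj => x; move: (testbit_eq x ke); bitwise_cases.
    by move: kc_m e_split; rewrite /e -addn_disjoint //; lia.
  have c2_m : 2 * c <= m by move: kc_m e_split; rewrite /e -addn_disjoint //; lia.
  rewrite Y_def c2_m; split => //; apply/eqP/Nat.bits_inj => x.
    by bitwise_cases.
  by move: (testbit_eq x kc); bitwise_cases.
have kc : Nat.land k c = 0.
  by apply: Nat.bits_inj => x; move: (testbit_eq x kY) (testbit_eq x Yc); bitwise_cases.
have Y_split : m - 2 * c = k + Nat.ldiff (m - 2 * c) k.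
  rewrite addn_disjoint; last by apply: Nat.bits_inj => x; bitwise_cases.
  by apply: Nat.bits_inj => x; move: (testbit_eq x kY); bitwise_cases.
have e_def : m - Nat.lor k c = Nat.lor c (Nat.ldiff (m - 2 * c) k).
  rewrite -addn_disjoint -?addn_disjoint //; first by move: Y_split; lia.
  by apply: Nat.bits_inj => x; move: (testbit_eq x Yc); bitwise_cases.
rewrite e_def; split.
- by rewrite -addn_disjoint //; move: Y_split; lia.
- by apply/eqP/Nat.bits_inj => x; move: (testbit_eq x kc); bitwise_cases.
- by apply/eqP/Nat.bits_inj => x; bitwise_cases.
Qed.

Lemma admissible_carry_inside m p q k :
  admissible m p q k && submask (Nat.land p q) (m - Nat.lor k p) =
  submask (Nat.lxor p q) k &&
  [&& submask k (m - 2 * Nat.land p q), 2 * Nat.land p q <= m &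
      Nat.land (m - 2 * Nat.land p q) (Nat.land p q) == 0].
Proof.
rewrite /admissible lor_eq_submask_lxor; case dk: (submask _ k) => //=.
by rewrite (lor_submask_lxor dk) -submask_subn_lor -!andbA.
Qed.

Local Open Scope ring_scope.

Section Sign.
Variable R : pzRingType.

Lemma sigma_disjointD a b :
  Nat.land a b = 0 -> sigma R (a + b) = sigma R a * sigma R b.
Proof. by move=> ab0; rewrite /sigma popcount_disjointD // exprD. Qed.

Lemma sigma_pow2 i : sigma R (Nat.pow 2 i) = -1.
Proof. by rewrite /sigma popcount_pow2. Qed.

Lemma sigmaK k : sigma R k * sigma R k = 1.
Proof. by rewrite /sigma -expr2 -exprM mulnC exprM sqrrN !expr1n. Qed.

Lemma sigma_lxor p q : sigma R (Nat.lxor p q) = sigma R p * sigma R q.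
Proof. by rewrite /sigma -exprD popcount_lxor exprD exprM sqrrN !expr1n mulr1. Qed.

Lemma sigma_int k : sigma R k = (sigma int k)%:~R.
Proof. by rewrite /sigma rmorph_sign. Qed.

Lemma sigma_flipbit k i : sigma R (flipbit k i) = - sigma R k.
Proof.
case ki: (Nat.testbit k i).
  have disj : Nat.land (flipbit k i) (Nat.pow 2 i) = 0.
    by apply: Nat.bits_inj => x; move: ki; bitwise_cases.
  have k_split : k = (flipbit k i + Nat.pow 2 i)%N.
    by rewrite addn_disjoint //; apply: Nat.bits_inj => x; move: ki; bitwise_cases.
  by rewrite [in RHS]k_split sigma_disjointD // sigma_pow2 mulrN1 opprK.
have disj : Nat.land k (Nat.pow 2 i) = 0.
  by apply: Nat.bits_inj => x; move: ki; bitwise_cases.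
by rewrite /flipbit Nat.lxor_lor // -addn_disjoint // sigma_disjointD // sigma_pow2 mulrN1.
Qed.

End Sign.

Lemma sum_sign_reversing n (P : pred nat) (f : nat -> nat) (F : nat -> int) :
    (forall k, (k < n)%N -> P k ->
       [/\ (f k < n)%N, P (f k), f (f k) = k & F (f k) = - F k]) ->
  \sum_(k < n | P k) F k = 0.
Proof.
move=> inv.
pose h (k : 'I_n) : 'I_n := if P k then insubd k (f k) else k.
have hE (k : 'I_n) : P k -> val (h k) = f k.
  by move=> Pk; have [fk_lt _ _ _] := inv k (ltn_ord k) Pk; rewrite /h Pk val_insubd fk_lt.
have hP (k : 'I_n) : P (h k) = P k.
  case Pk: (P k); last by rewrite /h Pk.
  by rewrite hE //; have [] := inv k (ltn_ord k) Pk.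
have hK : involutive h.
  move=> k; case Pk: (P k); last by rewrite /h !Pk.
  by apply: val_inj; rewrite hE ?hP // hE //; have [] := inv k (ltn_ord k) Pk.
have sumN : \sum_(k < n | P k) F k = - \sum_(k < n | P k) F k.
  rewrite {1}(reindex_inj (inv_inj hK)) /= -sumrN.
  apply: eq_big => k; first exact: hP.
  by rewrite hP => Pk; rewrite hE //; have [] := inv k (ltn_ord k) Pk.
by move: sumN; lia.
Qed.

Lemma cauchy_product_indicator (R : pzSemiRingType) (a b : nat -> R) m :
  \sum_(i < m.+1) a i * b (m - i)%N =
  \sum_(p < m.+1) \sum_(q < m.+1) a p * b q * ((p + q == m)%N)%:R.
Proof.
apply: eq_bigr => p _; have pm : (p <= m)%N := ltn_ord p.
transitivity (\sum_(q < m.+1 | q == (m - p)%N :> nat) a p * b q).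
  by rewrite (big_ord1_eq _ (fun q => a p * b q)) ltnS leq_subr.
rewrite big_mkcond; apply: eq_bigr => q _.
have -> : (p + q == m)%N = (q == (m - p)%N :> nat) by apply/eqP/eqP; lia.
by case: eqP; rewrite ?mulr1 ?mulr0.
Qed.

Lemma big_nat_widen_indicator {R : pzSemiRingType} {lo hi n : nat} (F : nat -> R) :
  (hi <= n)%N ->
  \sum_(lo <= t < hi) F t = \sum_(t < n) ((lo <= t < hi)%N)%:R * F t.
Proof.
move=> hi_n; rewrite big_geq_mkord (big_ord_widen_cond n) // big_mkcond.
by apply: eq_bigr => t _; rewrite andbC; case: (_ && _); rewrite ?mul1r ?mul0r.
Qed.

Lemma sum_sigma_submask_interval n d Y : (Y <= n)%N ->
  \sum_(k < n.+1 | submask d k && submask k Y) sigma int k =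
  if Y == d then sigma int d else 0.
Proof.
move=> Yn; case Yd: (submask Y d).
  have interval_point k : submask d k && submask k Y = (Y == d) && (k == d).
    move/eqP: Yd => Yd.
    apply/andP/andP => [[/eqP dk /eqP kY] | [/eqP -> /eqP ->]].
      split; apply/eqP; apply: Nat.bits_inj => x;
        by move: (testbit_eq x dk) (testbit_eq x kY) (testbit_eq x Yd); bitwise_cases.
    by rewrite /submask Nat.ldiff_diag.
  under eq_bigl => k do rewrite interval_point.
  have [<- | _] := eqVneq Y d; last by rewrite big_pred0.
  by rewrite (big_pred1 (Ordinal (Yn : (Y < n.+1)%N))).
have -> : (Y == d) = false by apply: contraFF Yd => /eqP->; rewrite /submask Nat.ldiff_diag.
move/eqP/Nat.bit_log2: Yd; set i := Nat.log2 _ => Ydi.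
have Yi : Nat.testbit Y i by move: Ydi; bitwise_cases.
have di : Nat.testbit d i = false by move: Ydi; bitwise_cases.
apply: (@sum_sign_reversing _ (fun k => submask d k && submask k Y) (flipbit^~ i)).
move=> k _ /andP[/eqP dk /eqP kY].
have kY' : submask (flipbit k i) Y.
  by apply/eqP/Nat.bits_inj => x; move: (testbit_eq x kY) Yi; bitwise_cases.
split; [| apply/andP; split => // | exact: flipbitK | exact: sigma_flipbit].
- by have := submask_leq kY'; lia.
- by apply/eqP/Nat.bits_inj => x; move: (testbit_eq x dk) di; bitwise_cases.
Qed.

Lemma sum_sigma_admissible_overlap m p q :
  \sum_(k < m.+1 | admissible m p q k &&
                   ~~ submask (Nat.land p q) (m - Nat.lor k p)) sigma int k = 0.
Proof.
pose top k := Nat.log2 (Nat.ldiff (Nat.land p q) (m - Nat.lor k p)).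
apply: (@sum_sign_reversing _
  (fun k => admissible m p q k && ~~ submask (Nat.land p q) (m - Nat.lor k p))
  (fun k => flipbit k (top k))).
move=> k _ /andP[/and3P[/eqP kpq kp_m /eqP disj] overlap].
have /eqP/Nat.bit_log2 top_bit := overlap.
have [pi qi ei] : [/\ Nat.testbit p (top k), Nat.testbit q (top k)
                    & Nat.testbit (m - Nat.lor k p) (top k) = false].
  by move: top_bit; rewrite -/(top k); bitwise_cases.
have flip_lor r : Nat.testbit r (top k) -> Nat.lor (flipbit k (top k)) r = Nat.lor k r.
  by move=> ri; apply: Nat.bits_inj => x; move: ri; bitwise_cases.
have top_flip : top (flipbit k (top k)) = top k by rewrite /top flip_lor.
rewrite top_flip flipbitK sigma_flipbit flip_lor //; split => //.
- by have := leq_lor (flipbit k (top k)) p; rewrite flip_lor //; lia.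
rewrite /admissible !flip_lor // kpq eqxx -kpq kp_m overlap andbT /=.
by apply/eqP/Nat.bits_inj => x; move: (testbit_eq x disj) ei; bitwise_cases.
Qed.

Lemma sum_sigma_admissible_int m p q :
  \sum_(k < m.+1 | admissible m p q k) sigma int k =
  if (p + q == m)%N then sigma int p * sigma int q else 0.
Proof.
set c := Nat.land p q; set d := Nat.lxor p q.
rewrite (bigID (fun k : 'I_m.+1 => submask c (m - Nat.lor k p))) /=.
rewrite sum_sigma_admissible_overlap addr0.
under eq_bigl => k do rewrite admissible_carry_inside -/c -/d.
have pq_split := addn_lxor_land p q; rewrite -/c -/d in pq_split.
case: (boolP ((2 * c <= m)%N && (Nat.land (m - 2 * c) c == 0%N))) =>
    [/andP[c2_m Yc] | no_carry].
  under eq_bigl => k do rewrite andbT.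
  rewrite sum_sigma_submask_interval ?leq_subr // -sigma_lxor -/d.
  by have -> : (m - 2 * c == d)%N = (p + q == m)%N by apply/eqP/eqP; lia.
rewrite big_pred0 => [|k]; last by rewrite !andbF.
case: eqP => // pqm; move: no_carry; rewrite pq_split in pqm.
have -> : (m - 2 * c = d)%N by lia.
rewrite -pqm leq_addl /=; apply: contraNeq => _; apply/eqP/Nat.bits_inj => x.
by rewrite /c /d; bitwise_cases.
Qed.

Lemma sum_sigma_admissible (R : pzRingType) m p q :
  \sum_(k < m.+1 | admissible m p q k) sigma R k =
  if (p + q == m)%N then sigma R p * sigma R q else 0.
Proof.
rewrite (eq_bigr _ (fun (k : 'I_m.+1) _ => sigma_int R k)) -rmorph_sum.
rewrite sum_sigma_admissible_int (sigma_int R p) (sigma_int R q).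
by case: ifP; rewrite ?rmorph0 ?rmorphM.
Qed.

Lemma summand_expand (R : comPzRingType) (a b : nat -> R) m k j : (j < m.+1)%N ->
  sigma R k *
    ((Tsier (k + m - j) k)%:R * (Tsier j k)%:R *
     (\sum_(j - k <= t < j.+1) (Tsier k (j - t))%:R * sigma R t * a t) *
     (\sum_(j - k <= t < j.+1) (Tsier k (j - t))%:R * sigma R t * b t)) =
  \sum_(p < m.+1) \sum_(q < m.+1)
    a p * b q * ((term_support m k j p q)%:R * (sigma R k * sigma R p * sigma R q)).
Proof.
move=> jm; rewrite !(big_nat_widen_indicator _ jm) -mulrA big_distrlr /= !mulr_sumr.
apply: eq_bigr => p _; rewrite !mulr_sumr; apply: eq_bigr => q _.
by rewrite /term_support !ltnS -!mulnb !natrM; ring.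
Qed.

Lemma sum_term_support_sigma (R : comPzRingType) m p q :
  \sum_(k < m.+1) \sum_(k <= j < m.+1)
     (term_support m k j p q)%:R * (sigma R k * sigma R p * sigma R q) =
  ((p + q == m)%N)%:R.
Proof.
transitivity ((\sum_(k < m.+1 | admissible m p q k) sigma R k) * (sigma R p * sigma R q)).
  rewrite big_distrl [RHS]big_mkcond; apply: eq_bigr => k _.
  rewrite -big_distrl -natr_sum sum_term_support -mulrA.
  by case: (admissible _ _ _ _); rewrite /= ?mul1r ?mul0r.
rewrite (sum_sigma_admissible R); case: (p + q == m)%N; last by rewrite mul0r.
by rewrite mulrACA !sigmaK mulr1.
Qed.

Theorem mainTheorem5 (R : comPzRingType) (a b : nat -> R) (m : nat) :
  \sum_(i < m.+1) a i * b (m - i)%N =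
  \sum_(k < m.+1) sigma R k *
    \sum_(k <= j < m.+1)
      ((Tsier (k + m - j) k)%:R * (Tsier j k)%:R *
       (\sum_(j - k <= t < j.+1) (Tsier k (j - t))%:R * sigma R t * a t) *
       (\sum_(j - k <= t < j.+1) (Tsier k (j - t))%:R * sigma R t * b t)).
Proof.
rewrite cauchy_product_indicator; symmetry.
transitivity (\sum_(k < m.+1) \sum_(k <= j < m.+1) \sum_(p < m.+1) \sum_(q < m.+1)
  a p * b q * ((term_support m k j p q)%:R * (sigma R k * sigma R p * sigma R q))).
  apply: eq_bigr => k _; rewrite mulr_sumr.
  by apply: eq_big_nat => j /andP[_ jm]; apply: summand_expand.
under eq_bigr => k _ do rewrite exchange_big.
under eq_bigr => k _ do under eq_bigr => p _ do rewrite exchange_big.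
rewrite exchange_big; under eq_bigr => p _ do rewrite exchange_big.
apply: eq_bigr => p _; apply: eq_bigr => q _.
rewrite -sum_term_support_sigma mulr_sumr; apply: eq_bigr => k _.
by rewrite mulr_sumr.
Qed.
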